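(* Let $n\geq 3$ and let $C_n^*$ be the bigraded complex described in the context. Let $\phi\colon C_n^*\to C_n^*$ be an $R$-linear chain map that is homogeneous of bigrading $(c_1,c_2)$, where $c_1>-2n$ and $c_2>-2n$. Then $\phi(\alpha_n^* )$ is either $0$ or of the form $c\,\alpha_n^*$ for some $c\in\mathbb{F}[\mathcal{U},\mathcal{V}]$.
   Context: Let $\mathbb{F}=\mathbb{Z}/2$ and $R=\mathbb{F}[\mathcal{U},\mathcal{V}]$, bigraded by $(\operatorname{gr}_{\mathcal{U}},\operatorname{gr}_{\mathcal{V}})$ with $\mathcal{U}$ of bigrading $(-2,0)$ and $\mathcal{V}$ of bigrading $(0,-2)$. For $n\geq 3$, $C_n^*$ is the free $R$-module with basis $\alpha^*_s$ ($1\leq s\leq 2n-1$); $\widetilde{\alpha}^*_s$ ($1\leq s\leq n-2$ and $n+1\leq s\leq 2n-2$); $b^{*,(s)}_{n-1}$ ($1\leq s\leq n-2$); $b^{*,(s)}_{n}$ ($1\leq s\leq 2n-2$); $b^{*,(s)}_{n+1}$ ($n+1\leq s\leq 2n-2$), with $R$-linear differential $\partial$ given by $\partial\alpha^*_s=0$, $\partial\widetilde{\alpha}^*_s=0$, and $\partial b^{*,(s)}_{n-1}=\mathcal{U}^{n(n-1)/2}\mathcal{V}^{n(n-1)/2}\alpha^*_s+\mathcal{V}^{n-s-1}\widetilde{\alpha}^*_s$ for $1\leq s\leq n-2$; $\partial b^{*,(s)}_{n}=\mathcal{U}^{n(n+1)/2-s}\mathcal{V}^{n(n+1)/2}\alpha^*_{s+1}+\mathcal{U}^{n}\widetilde{\alpha}^*_s$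 for $1\leq s\leq n-2$; $\partial b^{*,(s)}_{n}=\mathcal{U}^{n(n+1)/2}\mathcal{V}^{n(n-1)/2-n+s+1}\alpha^*_s+\mathcal{U}^{n(n+1)/2-s}\mathcal{V}^{n(n+1)/2}\alpha^*_{s+1}$ for $n-1\leq s\leq n$; $\partial b^{*,(s)}_{n}=\mathcal{U}^{n(n+1)/2}\mathcal{V}^{n(n-1)/2-n+s+1}\alpha^*_s+\mathcal{V}^{n}\widetilde{\alpha}^*_s$ for $n+1\leq s\leq 2n-2$; $\partial b^{*,(s)}_{n+1}=\mathcal{U}^{n(n-1)/2}\mathcal{V}^{n(n-1)/2}\alpha^*_{s+1}+\mathcal{U}^{s-n}\widetilde{\alpha}^*_s$ for $n+1\leq s\leq 2n-2$. The basis elements are assigned bigradings so that $\partial$ is homogeneous of bigrading $(-1,-1)$ (unique up to an overall shift; any such choice is fixed). A map is homogeneous of bigrading $(c_1,c_2)$ if it sends homogeneous elements of bigrading $(a,b)$ to homogeneous elements of bigrading $(a+c_1,b+c_2)$. *)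

From HB Require Import structures.
From mathcomp Require Import all_boot all_order all_algebra.
Unset Printing Implicit Defensive.
Import Order.TTheory GRing.Theory Num.Theory.
Local Open Scope ring_scope.

(* The ground ring R = F[U,V] with F = Z/2, realised as {poly {poly 'F_2}}:
   the outer variable is U, the inner variable is V.  The coefficient of
   U^i V^j in p : R is ((p`_i)`_j). *)
Notation R := {poly {poly 'F_2}}.
Definition U : R := 'X.
Definition V : R := ('X)%:P.

Definition Ka  : 'I_5 := @Ordinal 5 0 isT.
Definition Kt  : 'I_5 := @Ordinal 5 1 isT.
Definition Kb1 : 'I_5 := @Ordinal 5 2 isT.  (* b^{*,(s)}_{n-1}      *)
Definition Kb2 : 'I_5 := @Ordinal 5 3 isT.  (* b^{*,(s)}_{n}        *)
Definition Kb3 : 'I_5 := @Ordinal 5 4 isT.  (* b^{*,(s)}_{n+1}      *)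

Definition valid (n : nat) (p : 'I_5 * 'I_(2 * n)) : bool :=
  let k := p.1 in let s := val p.2 in
  if k == Ka then (1 <= s <= 2 * n - 1)%N
  else if k == Kt then ((1 <= s <= n - 2) || (n + 1 <= s <= 2 * n - 2))%N
  else if k == Kb1 then (1 <= s <= n - 2)%N
  else if k == Kb2 then (1 <= s <= 2 * n - 2)%N
  else (n + 1 <= s <= 2 * n - 2)%N.

Definition basis (n : nat) : finType := {p : 'I_5 * 'I_(2 * n) | valid n p}.

Notation Cn n := {ffun basis n -> R}.

(* The basis vector of kind k and index s (zero if (k,s) is not valid). *)
Definition bvec (n : nat) (k : 'I_5) (s : nat) : Cn n :=
  [ffun e : basis n => ((((val e).1 == k) && (val (val e).2 == s)))%:R].

Definition rscale (n : nat) (c : R) (x : Cn n) : Cn n := [ffun e => c * x e].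

Definition alpha  n s := bvec n Ka s.
Definition talpha n s := bvec n Kt s.

Definition N1 (n : nat) : nat := (n * (n - 1)) %/ 2.
Definition N2 (n : nat) : nat := (n * (n + 1)) %/ 2.

Definition dbasis (n : nat) (e : basis n) : Cn n :=
  let k := (val e).1 in let s := val (val e).2 in
  if k == Kb1 then
    rscale n (U ^+ N1 n * V ^+ N1 n) (alpha n s) + rscale n (V ^+ (n - s - 1)) (talpha n s)
  else if k == Kb2 then
    (if (s <= n - 2)%N then
       rscale n (U ^+ (N2 n - s) * V ^+ N2 n) (alpha n s.+1) + rscale n (U ^+ n) (talpha n s)
     else if (s <= n)%N then
       rscale n (U ^+ N2 n * V ^+ (N1 n + s + 1 - n)) (alpha n s)
         + rscale n (U ^+ (N2 n - s) * V ^+ N2 n) (alpha n s.+1)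
     else
       rscale n (U ^+ N2 n * V ^+ (N1 n + s + 1 - n)) (alpha n s) + rscale n (V ^+ n) (talpha n s))
  else if k == Kb3 then
    rscale n (U ^+ N1 n * V ^+ N1 n) (alpha n s.+1) + rscale n (U ^+ (s - n)) (talpha n s)
  else 0.

Definition d (n : nat) (x : Cn n) : Cn n := \sum_(e : basis n) rscale n (x e) (dbasis n e).

(* Bigrading: gr e = (gr_U, gr_V) of basis element e; U^i V^j e has
   bigrading (gr_U e - 2 i, gr_V e - 2 j).  x is homogeneous of bigrading
   (a,b) iff every monomial U^i V^j e occurring in x has bigrading (a,b). *)
Definition homog (n : nat) (gr : basis n -> int * int) (a b : int) (x : Cn n) : Prop :=
  forall (e : basis n) (i j : nat), ((x e)`_i)`_j != 0 ->
    (gr e).1 - 2 * (i%:Z) = a /\ (gr e).2 - 2 * (j%:Z) = b.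

Definition homog_map (n : nat) (gr : basis n -> int * int) (c1 c2 : int)
  (f : Cn n -> Cn n) : Prop :=
  forall (a b : int) (x : Cn n), homog n gr a b x -> homog n gr (a + c1) (b + c2) (f x).

(* Homogeneity of the differential pins down the bigrading of every generator
   relative to that of alpha_n: if U^p V^q e' occurs in d e, then
   gr e' = gr e - (1, 1) + 2 (p, q).  Along the zig-zag of the differential
   joining alpha_s to alpha_(s+1) (through b_n^(s) alone when s = n-1 or n,
   and through b_(n-1)^(s) or b_(n+1)^(s), talpha_s and b_n^(s) otherwise),
   the V-grading of alpha_s grows by at least 2n at each step up to alpha_n
   and the U-grading drops by at least 2n at each step after it.  Hence every
   generator other than alpha_n lies at least 2n below alpha_n in one of the
   two gradings.  Since U and V only lower gradings, an element homogeneous of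
   bigrading gr alpha_n + (c1, c2) with c1, c2 > -2n is a multiple of alpha_n. *)

From HB Require Import structures.
From mathcomp Require Import all_boot all_order all_algebra zify.
Import Order.TTheory GRing.Theory Num.Theory.
Local Open Scope ring_scope.

Lemma coef_UV p q : ((U ^+ p * V ^+ q)`_p)`_q = 1.
Proof. by rewrite /U /V -rmorphXn mulrC coefCM coefXn eqxx mulr1 coefXn eqxx. Qed.

Lemma N2_N1 n : N2 n = (N1 n + n)%N.
Proof. rewrite /N1 /N2; nia. Qed.

Lemma N1_ge3 n : (3 <= n)%N -> (3 <= N1 n)%N.
Proof. rewrite /N1; nia. Qed.

Lemma steps_gap (f : nat -> int) (c : int) (a b : nat) : 0 <= c ->
  (forall s, (a <= s < b)%N -> f s + c <= f s.+1) ->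
  forall s t, (a <= s < t)%N -> (t <= b)%N -> f s + c <= f t.
Proof.
move=> c_ge0 step s; elim=> [|t IH] /andP[a_le_s]; first by [].
rewrite ltnS leq_eqVlt => /orP[/eqP <- | s_lt_t] t_lt_b.
  by apply: step; rewrite a_le_s.
have := step t; have := IH; rewrite a_le_s s_lt_t /=; lia.
Qed.

Section Grading.

Variable n : nat.

Lemma basis_inj (e e' : basis n) :
  (val e).1 = (val e').1 -> val (val e).2 = val (val e').2 -> e = e'.
Proof.
move=> eq_k eq_s; apply: val_inj.
by case: (val e) (val e') eq_k eq_s => [k o] [k' o'] /= -> /val_inj ->.
Qed.

Lemma bvec_basis (e0 e : basis n) :
  bvec n (val e0).1 (val (val e0).2) e = (e == e0)%:R.
Proof. by rewrite ffunE. Qed.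

Lemma rscaleE c (x : Cn n) e : rscale n c x e = c * x e.
Proof. by rewrite ffunE. Qed.

Lemma rscale_bvecE c k s e :
  rscale n c (bvec n k s) e = if ((val e).1 == k) && (val (val e).2 == s) then c else 0.
Proof. by rewrite !ffunE; case: ifP => _; [apply: mulr1 | apply: mulr0]. Qed.

Lemma d_bvec (e0 : basis n) : d n (bvec n (val e0).1 (val (val e0).2)) = dbasis n e0.
Proof.
rewrite /d (bigD1 e0) //= big1 ?addr0 => [|e /negbTE e_neq].
  by apply/ffunP => e; rewrite rscaleE bvec_basis eqxx mul1r.
by apply/ffunP => e'; rewrite rscaleE bvec_basis e_neq mul0r ffunE.
Qed.

Lemma eq_rscale_bvec (x : Cn n) (e0 : basis n) :
  (forall e, x e != 0 -> e = e0) -> x = rscale n (x e0) (bvec n (val e0).1 (val (val e0).2)).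
Proof.
move=> supp; apply/ffunP => e; rewrite rscaleE bvec_basis.
have [-> | e_neq] := eqVneq e e0; first by rewrite mulr1.
by rewrite mulr0; apply: contraNeq e_neq => /supp ->.
Qed.

Variable gr : basis n -> int * int.

Lemma homog_bvec (e0 : basis n) :
  homog n gr (gr e0).1 (gr e0).2 (bvec n (val e0).1 (val (val e0).2)).
Proof.
move=> e i j; rewrite bvec_basis.
have [-> | _] := eqVneq e e0; last by rewrite !coef0 eqxx.
case: i j => [|i] [|j]; rewrite ?coefC //= ?coef0 ?eqxx //.
by rewrite !mulr0 !subr0.
Qed.

Lemma homog_gr_ge a b (x : Cn n) e : homog n gr a b x -> x e != 0 ->
  a <= (gr e).1 /\ b <= (gr e).2.
Proof.
move=> x_homog x_e_neq0.
have := x_homog e (size (x e)).-1 (size (lead_coef (x e))).-1.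
rewrite -/(lead_coef _) -/(lead_coef _) !lead_coef_eq0 => /(_ x_e_neq0) [<- <-].
by split; rewrite gerBl mulr_ge0.
Qed.

Hypothesis n_ge3 : (3 <= n)%N.
Hypothesis d_homog : homog_map n gr (-1) (-1) (d n).

Definition gr_at (k : 'I_5) (s : nat) : int * int :=
  if [pick e : basis n | ((val e).1 == k) && (val (val e).2 == s)] is Some e
  then gr e else (0, 0).

Lemma gr_at_basis (e : basis n) : gr_at (val e).1 (val (val e).2) = gr e.
Proof.
rewrite /gr_at; case: pickP => [e' /andP[/eqP k_eq /eqP s_eq] | /(_ e)].
  by congr gr; apply: basis_inj.
by rewrite !eqxx.
Qed.

Definition occurs (k : 'I_5) (s : nat) : Prop :=
  exists e : basis n, (val e).1 = k /\ val (val e).2 = s.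

Lemma occurs_valid k s (s_lt : (s < 2 * n)%N) : valid n (k, Ordinal s_lt) -> occurs k s.
Proof. by move=> k_s_valid; exists (Sub (k, Ordinal s_lt) k_s_valid). Qed.

Lemma occurs_alpha s : (1 <= s <= 2 * n - 1)%N -> occurs Ka s.
Proof. move=> s_range; have s_lt : (s < 2 * n)%N by lia. exact: (occurs_valid _ _ s_lt). Qed.

Lemma occurs_talpha s : (1 <= s <= n - 2)%N || (n + 1 <= s <= 2 * n - 2)%N -> occurs Kt s.
Proof. move=> s_range; have s_lt : (s < 2 * n)%N by lia. exact: (occurs_valid _ _ s_lt). Qed.

Lemma occurs_b1 s : (1 <= s <= n - 2)%N -> occurs Kb1 s.
Proof. move=> s_range; have s_lt : (s < 2 * n)%N by lia. exact: (occurs_valid _ _ s_lt). Qed.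

Lemma occurs_b2 s : (1 <= s <= 2 * n - 2)%N -> occurs Kb2 s.
Proof. move=> s_range; have s_lt : (s < 2 * n)%N by lia. exact: (occurs_valid _ _ s_lt). Qed.

Lemma occurs_b3 s : (n + 1 <= s <= 2 * n - 2)%N -> occurs Kb3 s.
Proof. move=> s_range; have s_lt : (s < 2 * n)%N by lia. exact: (occurs_valid _ _ s_lt). Qed.

Definition gr_edge (gb gt : int * int) (p q : nat) : Prop :=
  gt.1 = gb.1 - 1 + 2 * p%:Z /\ gt.2 = gb.2 - 1 + 2 * q%:Z.

Lemma gr_at_edge kb sb kt st p q : occurs kb sb -> occurs kt st ->
  (forall eb et : basis n, (val eb).1 = kb -> val (val eb).2 = sb ->
     (val et).1 = kt -> val (val et).2 = st -> dbasis n eb et = U ^+ p * V ^+ q) ->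
  gr_edge (gr_at kb sb) (gr_at kt st) p q.
Proof.
move=> [eb [kb_eq sb_eq]] [et [kt_eq st_eq]] d_eb_et.
rewrite -kb_eq -sb_eq -kt_eq -st_eq !gr_at_basis.
have := d_homog _ _ _ (homog_bvec eb) et p q.
rewrite d_bvec (d_eb_et eb et) // coef_UV oner_neq0 => /(_ isT).
rewrite /gr_edge; lia.
Qed.

Lemma edge_b1_alpha s : (1 <= s <= n - 2)%N ->
  gr_edge (gr_at Kb1 s) (gr_at Ka s) (N1 n) (N1 n).
Proof.
move=> s_range; apply: gr_at_edge; [apply: occurs_b1; lia | apply: occurs_alpha; lia |].
move=> eb et kb_eq sb_eq kt_eq st_eq; rewrite /dbasis kb_eq sb_eq /=.
by rewrite ffunE !rscale_bvecE kt_eq st_eq !eqxx /= addr0.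
Qed.

Lemma edge_b1_talpha s : (1 <= s <= n - 2)%N ->
  gr_edge (gr_at Kb1 s) (gr_at Kt s) 0 (n - s - 1).
Proof.
move=> s_range; apply: gr_at_edge; [apply: occurs_b1; lia | apply: occurs_talpha; lia |].
move=> eb et kb_eq sb_eq kt_eq st_eq; rewrite /dbasis kb_eq sb_eq /=.
by rewrite ffunE !rscale_bvecE kt_eq st_eq !eqxx /= add0r expr0 mul1r.
Qed.

Lemma edge_b2_alphaS s : (1 <= s <= n)%N ->
  gr_edge (gr_at Kb2 s) (gr_at Ka s.+1) (N2 n - s) (N2 n).
Proof.
move=> s_range; apply: gr_at_edge; [apply: occurs_b2; lia | apply: occurs_alpha; lia |].
move=> eb et kb_eq sb_eq kt_eq st_eq; rewrite /dbasis kb_eq sb_eq /=.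
case: ifP => _; last rewrite ifT; last lia.
  by rewrite ffunE !rscale_bvecE kt_eq st_eq !eqxx /= addr0.
by rewrite ffunE !rscale_bvecE kt_eq st_eq !eqxx (gtn_eqF (ltnSn s)) /= add0r.
Qed.

Lemma edge_b2_talpha_lo s : (1 <= s <= n - 2)%N ->
  gr_edge (gr_at Kb2 s) (gr_at Kt s) n 0.
Proof.
move=> s_range; apply: gr_at_edge; [apply: occurs_b2; lia | apply: occurs_talpha; lia |].
move=> eb et kb_eq sb_eq kt_eq st_eq; rewrite /dbasis kb_eq sb_eq /= ifT; last lia.
by rewrite ffunE !rscale_bvecE kt_eq st_eq !eqxx /= add0r expr0 mulr1.
Qed.

Lemma edge_b2_alpha s : (n - 1 <= s <= 2 * n - 2)%N ->
  gr_edge (gr_at Kb2 s) (gr_at Ka s) (N2 n) (N1 n + s + 1 - n).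
Proof.
move=> s_range; apply: gr_at_edge; [apply: occurs_b2; lia | apply: occurs_alpha; lia |].
move=> eb et kb_eq sb_eq kt_eq st_eq; rewrite /dbasis kb_eq sb_eq /= ifF; last lia.
by case: ifP => _; rewrite ffunE !rscale_bvecE kt_eq st_eq !eqxx ?(ltn_eqF (ltnSn s)) /= addr0.
Qed.

Lemma edge_b2_talpha_hi s : (n + 1 <= s <= 2 * n - 2)%N ->
  gr_edge (gr_at Kb2 s) (gr_at Kt s) 0 n.
Proof.
move=> s_range; apply: gr_at_edge; [apply: occurs_b2; lia | apply: occurs_talpha; lia |].
move=> eb et kb_eq sb_eq kt_eq st_eq; rewrite /dbasis kb_eq sb_eq /= !ifF; try lia.
by rewrite ffunE !rscale_bvecE kt_eq st_eq !eqxx /= add0r expr0 mul1r.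
Qed.

Lemma edge_b3_alphaS s : (n + 1 <= s <= 2 * n - 2)%N ->
  gr_edge (gr_at Kb3 s) (gr_at Ka s.+1) (N1 n) (N1 n).
Proof.
move=> s_range; apply: gr_at_edge; [apply: occurs_b3; lia | apply: occurs_alpha; lia |].
move=> eb et kb_eq sb_eq kt_eq st_eq; rewrite /dbasis kb_eq sb_eq /=.
by rewrite ffunE !rscale_bvecE kt_eq st_eq !eqxx /= addr0.
Qed.

Lemma edge_b3_talpha s : (n + 1 <= s <= 2 * n - 2)%N ->
  gr_edge (gr_at Kb3 s) (gr_at Kt s) (s - n) 0.
Proof.
move=> s_range; apply: gr_at_edge; [apply: occurs_b3; lia | apply: occurs_talpha; lia |].
move=> eb et kb_eq sb_eq kt_eq st_eq; rewrite /dbasis kb_eq sb_eq /=.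
by rewrite ffunE !rscale_bvecE kt_eq st_eq !eqxx /= add0r expr0 mulr1.
Qed.

Lemma grV_alpha_step s : (1 <= s <= n - 1)%N ->
  (gr_at Ka s).2 + 2 * n%:Z <= (gr_at Ka s.+1).2.
Proof.
move=> s_range; have := N2_N1 n.
have /edge_b2_alphaS[_ alphaS_b2] : (1 <= s <= n)%N by lia.
have [s_lo | s_hi] := leqP s (n - 2).
  have s_range' : (1 <= s <= n - 2)%N by lia.
  have [_ alpha_b1] := edge_b1_alpha s s_range'.
  have [_ talpha_b1] := edge_b1_talpha s s_range'.
  have [_ talpha_b2] := edge_b2_talpha_lo s s_range'.
  lia.
have /edge_b2_alpha[_ alpha_b2] : (n - 1 <= s <= 2 * n - 2)%N by lia.
lia.
Qed.

Lemma grU_alpha_step s : (n <= s <= 2 * n - 2)%N ->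
  (gr_at Ka s.+1).1 + 2 * n%:Z <= (gr_at Ka s).1.
Proof.
move=> s_range; have := N2_N1 n.
have /edge_b2_alpha[alpha_b2 _] : (n - 1 <= s <= 2 * n - 2)%N by lia.
have [s_eq | s_ne] := eqVneq s n.
  have /edge_b2_alphaS[alphaS_b2 _] : (1 <= s <= n)%N by lia.
  lia.
have s_range' : (n + 1 <= s <= 2 * n - 2)%N by lia.
have [talpha_b2 _] := edge_b2_talpha_hi s s_range'.
have [alphaS_b3 _] := edge_b3_alphaS s s_range'.
have [talpha_b3 _] := edge_b3_talpha s s_range'.
lia.
Qed.

Lemma grV_alpha_lt s : (1 <= s < n)%N -> (gr_at Ka s).2 + 2 * n%:Z <= (gr_at Ka n).2.
Proof.
move=> s_range; apply: (steps_gap (fun t => (gr_at Ka t).2) _ 1 n); try lia.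
by move=> t t_range; apply: grV_alpha_step; lia.
Qed.

Lemma grU_alpha_gt s : (n < s <= 2 * n - 1)%N -> (gr_at Ka s).1 + 2 * n%:Z <= (gr_at Ka n).1.
Proof.
move=> s_range; suff : - (gr_at Ka n).1 + 2 * n%:Z <= - (gr_at Ka s).1 by lia.
apply: (steps_gap (fun t => - (gr_at Ka t).1) _ n (2 * n - 1)); try lia.
by move=> t t_range; have := grU_alpha_step t; lia.
Qed.

Lemma grV_alpha_le s : (1 <= s <= n)%N -> (gr_at Ka s).2 <= (gr_at Ka n).2.
Proof.
move=> s_range; have [-> // | s_ne] := eqVneq s n.
by have := grV_alpha_lt s; lia.
Qed.

Lemma grU_alpha_le s : (n <= s <= 2 * n - 1)%N -> (gr_at Ka s).1 <= (gr_at Ka n).1.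
Proof.
move=> s_range; have [-> // | s_ne] := eqVneq s n.
by have := grU_alpha_gt s; lia.
Qed.

Definition far_below (g : int * int) : Prop :=
  g.1 + 2 * n%:Z <= (gr_at Ka n).1 \/ g.2 + 2 * n%:Z <= (gr_at Ka n).2.

Lemma far_below_alpha s : (1 <= s <= 2 * n - 1)%N -> s != n -> far_below (gr_at Ka s).
Proof.
move=> s_range s_ne; case: (ltngtP s n) s_ne => // [s_lt | s_gt] _.
  by right; apply: grV_alpha_lt; lia.
by left; apply: grU_alpha_gt; lia.
Qed.

Lemma far_below_talpha s : (1 <= s <= n - 2)%N || (n + 1 <= s <= 2 * n - 2)%N ->
  far_below (gr_at Kt s).
Proof.
move=> s_range_or; have := N2_N1 n; case/orP: s_range_or => s_range.
  have [_ talpha_b2] := edge_b2_talpha_lo s s_range.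
  have /edge_b2_alphaS[_ alphaS_b2] : (1 <= s <= n)%N by lia.
  by right; have := grV_alpha_le s.+1; lia.
have [talpha_b2 _] := edge_b2_talpha_hi s s_range.
have /edge_b2_alpha[alpha_b2 _] : (n - 1 <= s <= 2 * n - 2)%N by lia.
by left; have := grU_alpha_le s; lia.
Qed.

Lemma far_below_b1 s : (1 <= s <= n - 2)%N -> far_below (gr_at Kb1 s).
Proof.
move=> s_range; have [_ alpha_b1] := edge_b1_alpha s s_range.
by right; have := grV_alpha_lt s; have := N1_ge3 n n_ge3; lia.
Qed.

Lemma far_below_b2 s : (1 <= s <= 2 * n - 2)%N -> far_below (gr_at Kb2 s).
Proof.
move=> s_range; have := N2_N1 n; have := N1_ge3 n n_ge3.
have [s_lo | s_hi] := ltnP s n.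
  have /edge_b2_alphaS[_ alphaS_b2] : (1 <= s <= n)%N by lia.
  by right; have := grV_alpha_le s.+1; lia.
have /edge_b2_alpha[alpha_b2 _] : (n - 1 <= s <= 2 * n - 2)%N by lia.
by left; have := grU_alpha_le s; lia.
Qed.

Lemma far_below_b3 s : (n + 1 <= s <= 2 * n - 2)%N -> far_below (gr_at Kb3 s).
Proof.
move=> s_range; have [alphaS_b3 _] := edge_b3_alphaS s s_range.
by left; have := grU_alpha_gt s.+1; have := N1_ge3 n n_ge3; lia.
Qed.

Lemma far_below_basis (e : basis n) :
  ((val e).1, val (val e).2) != (Ka, n) -> far_below (gr e).
Proof.
rewrite -gr_at_basis; case: e => [[[k k_lt] [s s_lt]] /=]; rewrite /valid /=.
case: k k_lt => [|[|[|[|[|k]]]]] k_lt //=; rewrite (bool_irrelevance k_lt isT).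
- exact: far_below_alpha.
- by move=> s_range _; apply: far_below_talpha.
- by move=> s_range _; apply: far_below_b1.
- by move=> s_range _; apply: far_below_b2.
- by move=> s_range _; apply: far_below_b3.
Qed.

Lemma homog_alpha_support (e0 : basis n) (x : Cn n) (c1 c2 : int) :
  (val e0).1 = Ka -> val (val e0).2 = n ->
  - (2 * n%:Z) < c1 -> - (2 * n%:Z) < c2 ->
  homog n gr ((gr e0).1 + c1) ((gr e0).2 + c2) x ->
  forall e, x e != 0 -> e = e0.
Proof.
move=> k0 s0 c1_gt c2_gt x_homog e x_e_neq0.
have /homog_gr_ge/(_ x_e_neq0)[ge1 ge2] := x_homog.
have [[k_eq s_eq] | e_ne] := eqVneq ((val e).1, val (val e).2) (Ka, n).
  by apply: basis_inj; rewrite ?k0 ?s0.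
have gr_e0 : gr_at Ka n = gr e0 by rewrite -gr_at_basis k0 s0.
by have := far_below_basis e e_ne; rewrite /far_below gr_e0; lia.
Qed.

End Grading.

Theorem lemma2p9 (n : nat) (hn : (3 <= n)%N)
  (gr : basis n -> int * int)
  (hgr : homog_map n gr (-1) (-1) (d n))
  (phi : Cn n -> Cn n)
  (phi_lin : forall (c : R) (x y : Cn n), phi (rscale n c x + y) = rscale n c (phi x) + phi y)
  (phi_chain : forall x : Cn n, phi (d n x) = d n (phi x))
  (c1 c2 : int)
  (hphi : homog_map n gr c1 c2 phi)
  (hc1 : - (2 * n%:Z) < c1) (hc2 : - (2 * n%:Z) < c2) :
  phi (alpha n n) = 0 \/ exists c : R, phi (alpha n n) = rscale n c (alpha n n).
Proof.
have [e0 [k0 s0]] : occurs n Ka n by apply: occurs_alpha; lia.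
have alpha_e0 : alpha n n = bvec n (val e0).1 (val (val e0).2) by rewrite k0 s0.
right; exists (phi (alpha n n) e0); rewrite alpha_e0.
apply: eq_rscale_bvec; apply: (homog_alpha_support n gr hn hgr e0 _ c1 c2 k0 s0 hc1 hc2).
by apply: hphi; apply: homog_bvec.
Qed.
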